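(* A graph $G\in\mathcal{C}_{n,m}$ is Whitney-maximum if and only if it is strong.
   Context: $\mathcal{C}_{n,m}$ denotes the set of all connected simple graphs on $n$ vertices and $m$ edges. For a graph $G$ with vertex set $V$, $\kappa(G)$ is its number of connected components, $r(G)=|V|-\kappa(G)$, $c(G)=|E(G)|-|V|+\kappa(G)$. $\mathcal{S}(G)$ is the set of all spanning subgraphs of $G$. The Whitney polynomial is $W_G(x,y)=\sum_{H\in\mathcal{S}(G)}x^{r(G)-r(H)}y^{c(H)}$. A bivariate polynomial is nonnegative if all its coefficients are nonnegative real numbers. $N_i^{(k)}(G)$ is the number of spanning subgraphs of $G$ with exactly $i$ edges and at most $k$ connected components. A graph $G\in\mathcal{C}_{n,m}$ is strong if $N_i^{(k)}(G)\ge N_i^{(k)}(H)$ for all $H\in\mathcal{C}_{n,m}$, $i\in\{0,\ldots,m\}$, $k\in\{1,\ldots,n\}$. $G\in\mathcal{C}_{n,m}$ is Whitney-maximum if for every $H\in\mathcal{C}_{n,m}$ there is a nonnegative polynomial $Q_H$ with $W_G(x,y)-W_H(x,y)=(1-xy)Q_H(x,y)$. *)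

From HB Require Import structures.
From mathcomp Require Import all_boot all_order all_algebra.
Set Implicit Arguments. Unset Strict Implicit. Unset Printing Implicit Defensive.
Import Order.TTheory GRing.Theory Num.Theory.

Definition edgeset (n : nat) := {set {set 'I_n}}.

Definition simple_graph n (E : edgeset n) : bool :=
  [forall e in E, #|e| == 2].

Definition adj n (F : edgeset n) : rel 'I_n := fun x y => [set x; y] \in F.

Definition kappa n (F : edgeset n) : nat :=
  #| [set [set y | connect (adj F) x y] | x : 'I_n] |.

Definition rk n (F : edgeset n) : nat := n - kappa F.
Definition crk n (F : edgeset n) : nat := (#|F| + kappa F) - n.

Definition Cnm (n m : nat) (E : edgeset n) : bool :=
  [&& simple_graph E, #|E| == m & kappa E == 1].

Local Open Scope ring_scope.

(* Bivariate polynomials: {poly {poly R}}, x is the outer variable 'X,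
   y is the inner variable ('X)%:P. *)
Definition varx (R : nzRingType) : {poly {poly R}} := 'X.
Definition vary (R : nzRingType) : {poly {poly R}} := ('X)%:P.

Definition whitney (R : nzRingType) n (E : edgeset n) : {poly {poly R}} :=
  \sum_(F : edgeset n | F \subset E)
     varx R ^+ (rk E - rk F)%N * vary R ^+ crk F.

Definition nonneg_poly2 (R : realFieldType) (Q : {poly {poly R}}) : Prop :=
  forall i j : nat, 0 <= (Q`_i)`_j.

Definition whitney_maximum (R : realFieldType) n m (G : edgeset n) : Prop :=
  Cnm m G /\
  forall H : edgeset n, Cnm m H ->
    exists Q : {poly {poly R}}, nonneg_poly2 Q /\
      whitney R G - whitney R H = (1 - varx R * vary R) * Q.

Local Close Scope ring_scope.

Definition Nik n (E : edgeset n) (i k : nat) : nat :=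
  #| [set F : edgeset n | [&& F \subset E, #|F| == i & kappa F <= k]] |.

Definition strong n m (G : edgeset n) : Prop :=
  Cnm m G /\
  forall H : edgeset n, Cnm m H ->
    forall i k : nat, i <= m -> 1 <= k <= n -> Nik H i k <= Nik G i k.

From HB Require Import structures.
From mathcomp Require Import all_boot all_order all_algebra.
From mathcomp Require Import zify ring.
Set Implicit Arguments. Unset Strict Implicit. Unset Printing Implicit Defensive.
Import Order.TTheory GRing.Theory Num.Theory.

(* For connected G the coefficient of x^p y^q in W_G counts the spanning
   subgraphs with exactly p+1 components and q+n-p-1 edges.  Collecting the
   cumulative counts into Q_G = sum_(p<n) sum_q N_(q+n-p-1)^(p+1)(G) x^p y^q,
   the product (1 - xy) Q_G telescopes (exactly k components = at most k
   minus at most k-1) back to W_G, up to a boundary term at p = n which only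
   depends on n and m.  Hence W_G - W_H = (1 - xy)(Q_G - Q_H), the quotient
   is unique because 1 - xy is not a zero divisor, and the coefficients of
   Q_G - Q_H are exactly the differences N_i^(k)(G) - N_i^(k)(H). *)

Section Components.

Variable n : nat.
Implicit Types (E F : edgeset n) (x y z : 'I_n).

Definition component F z : {set 'I_n} := [set w | connect (adj F) z w].

Lemma kappaE F : kappa F = #|[set component F z | z : 'I_n]|.
Proof. by []. Qed.

Lemma adj_sym F : symmetric (adj F).
Proof. by move=> x y; rewrite /adj setUC. Qed.

Lemma connect_adjC F x y : connect (adj F) x y = connect (adj F) y x.
Proof. exact: (sym_connect_sym (@adj_sym F)). Qed.

Lemma eq_component F x y : connect (adj F) x y -> component F x = component F y.
Proof.
move=> cxy; apply/setP => w; rewrite !inE; apply/idP/idP => h.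
- by apply: connect_trans h; rewrite connect_adjC.
- exact: connect_trans cxy h.
Qed.

Lemma kappa_le F : kappa F <= n.
Proof. by rewrite kappaE (leq_trans (leq_imset_card _ _)) // card_ord. Qed.

Lemma kappa_gt0 F : 0 < n -> 0 < kappa F.
Proof.
move=> n_gt0; rewrite kappaE; apply/card_gt0P.
by exists (component F (Ordinal n_gt0)); apply: imset_f.
Qed.

Lemma kappa_set0 : kappa (set0 : edgeset n) = n.
Proof.
have componentE z : component set0 z = [set z].
  apply/setP => w; rewrite !inE; apply/idP/idP.
  - by case/connectP => [[|a p]] /=; [move=> _ -> | rewrite /adj inE].
  - by move/eqP <-; rewrite connect0.
by rewrite kappaE (eq_imset _ componentE) card_imset ?card_ord //; apply: set1_inj.
Qed.

Lemma connect_setD1_edge F x y u v :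
  let F' := F :\ [set x; y] in
  connect (adj F) u v ->
  connect (adj F') u v \/
  (connect (adj F') u x || connect (adj F') u y) &&
  (connect (adj F') v x || connect (adj F') v y).
Proof.
move=> F' /connectP [p pth ->] {v}.
elim: p u pth => [|w p IH] u /=; first by left.
case/andP=> huw /IH {}IH.
have [h|e] : adj F' u w \/ [set u; w] = [set x; y].
  move: huw; rewrite /adj /F' in_setD1 => ->; rewrite andbT.
  by case: eqP; [right | left].
- case: IH => [c|/andP [c1 c2]]; [left | right].
  + exact: connect_trans (connect1 h) c.
  + rewrite c2 andbT; case/orP: c1 => c1.
    * by rewrite (connect_trans (connect1 h) c1).
    * by rewrite (connect_trans (connect1 h) c1) orbT.
- have hu : u \in [set x; y] by rewrite -e set21.
  have hw : w \in [set x; y] by rewrite -e set22.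
  right; apply/andP; split.
  + by move: hu; rewrite !inE => /orP [] /eqP ->; rewrite connect0 ?orbT.
  + case: IH => [c|/andP [_ c2] //].
    by move: hw; rewrite !inE => /orP [] /eqP hw; subst w;
      rewrite !(connect_adjC _ (last _ _)) c ?orbT.
Qed.

(* Components of F \ xy other than that of x map injectively onto components
   of F, so deleting an edge creates at most one new component. *)
Lemma kappa_setD1_edge F x y : kappa (F :\ [set x; y]) <= (kappa F).+1.
Proof.
set F' := F :\ [set x; y].
have sub_connect a b : connect (adj F') a b -> connect (adj F) a b.
  apply: connect_sub => c d; rewrite /adj /F' in_setD1 => /andP [_ h].
  exact: connect1.
pose g (C : {set 'I_n}) := [set w | [exists z in C, connect (adj F) z w]].
have gE z : g (component F' z) = component F z.
  apply/setP => w; rewrite !inE; apply/existsP/idP.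
  - by case=> z' /andP []; rewrite inE => /sub_connect; apply: connect_trans.
  - by move=> h; exists z; rewrite inE connect0.
set S := [set component F' z | z : 'I_n] :\ component F' x.
have g_inj : {in S &, injective g}.
  move=> C1 C2; rewrite !inE.
  move=> /andP [n1 /imsetP [z1 _ E1]] /andP [n2 /imsetP [z2 _ E2]].
  subst C1 C2; rewrite !gE => e.
  have : connect (adj F) z1 z2.
    have : z2 \in component F z2 by rewrite inE connect0.
    by rewrite -e inE.
  case/(connect_setD1_edge x y) => [|/andP [c1 c2]]; first exact: eq_component.
  case/orP: c1 => c1; first by rewrite (eq_component c1) eqxx in n1.
  case/orP: c2 => c2; first by rewrite (eq_component c2) eqxx in n2.
  by rewrite (eq_component c1) (eq_component c2).
have card_S : #|S| <= kappa F.
  rewrite -(card_in_imset g_inj) kappaE; apply: subset_leq_card.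
  apply/subsetP => C /imsetP [D]; rewrite inE => /andP [_ /imsetP [z _ ->]] ->.
  by rewrite gE imset_f.
rewrite kappaE (cardsD1 (component F' x)) -/S.
by case: (_ \in _) => /=; rewrite ?add0n ?ltnS // ltnW.
Qed.

Lemma simple_graphS E F : simple_graph E -> F \subset E -> simple_graph F.
Proof.
by move=> /forall_inP sE /subsetP sFE; apply/forall_inP => e /sFE /sE.
Qed.

Lemma leq_card_kappa F : simple_graph F -> n <= #|F| + kappa F.
Proof.
move=> sF; move Hk: #|F| => k; elim: k F sF Hk => [|k IH] F sF Hk.
  by move/cards0_eq: Hk => ->; rewrite kappa_set0.
have /card_gt0P [e eF] : 0 < #|F| by rewrite Hk.
have /cards2P [x [y [_ exy]]] : #|e| == 2 by move/forall_inP: sF; apply.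
subst e.
have sF' : simple_graph (F :\ [set x; y]) by apply: simple_graphS sF (subsetDl _ _).
have cardF' : #|F :\ [set x; y]| = k.
  by move: Hk; rewrite (cardsD1 [set x; y] F) eF => -[].
apply: leq_trans (IH _ sF' cardF') _.
by rewrite addSnnS leq_add2l kappa_setD1_edge.
Qed.

End Components.

Section SubgraphCounts.

Variable n : nat.
Implicit Types (E : edgeset n) (i k : nat).

Definition Nik_exact E i k : nat :=
  #|[set F : edgeset n | [&& F \subset E, #|F| == i & kappa F == k]]|.

Lemma NikS E i k : Nik E i k.+1 = Nik E i k + Nik_exact E i k.+1.
Proof.
rewrite /Nik /Nik_exact -(cardsID
  [set F : edgeset n | [&& F \subset E, #|F| == i & kappa F <= k]]
  [set F : edgeset n | [&& F \subset E, #|F| == i & kappa F <= k.+1]]).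
congr (_ + _); apply: eq_card => F; rewrite !inE;
  by case: (F \subset E); case: (#|F| == i) => //=; apply/idP/idP; lia.
Qed.

Lemma Nik0 E i : 0 < n -> Nik E i 0 = 0.
Proof.
move=> n_gt0; apply/eqP; rewrite cards_eq0; apply/eqP/setP => F; rewrite !inE.
by rewrite leqn0 eqn0Ngt kappa_gt0 // !andbF.
Qed.

Lemma Nik_small E i k : simple_graph E -> i + k < n -> Nik E i k = 0.
Proof.
move=> sE lt; apply/eqP; rewrite cards_eq0; apply/eqP/setP => F; rewrite !inE.
apply/negbTE/negP => /and3P [sub /eqP cardF kF].
have := leq_card_kappa (simple_graphS sE sub); lia.
Qed.

Lemma Nik_gt_card E i k : #|E| < i -> Nik E i k = 0.
Proof.
move=> lt; apply/eqP; rewrite cards_eq0; apply/eqP/setP => F; rewrite !inE.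
apply/negbTE/negP => /and3P [sub /eqP cardF _].
have := subset_leq_card sub; lia.
Qed.

Lemma Nik_n E i : Nik E i n = 'C(#|E|, i).
Proof.
by rewrite -cards_draws /Nik; apply: eq_card => F; rewrite !inE kappa_le !andbT.
Qed.

End SubgraphCounts.

Local Open Scope ring_scope.

Section WhitneyCoefficients.

Variable R : comNzRingType.

Lemma coef_1subXY (Q : {poly {poly R}}) p q :
  (((1 - varx R * vary R) * Q)`_p)`_q =
  (Q`_p)`_q - (if p is p'.+1 then if q is q'.+1 then (Q`_p')`_q' else 0 else 0).
Proof.
rewrite mulrBl mul1r -mulrA coefB /varx /vary coefXM coefB.
case: p => [|p] /=; first by rewrite coef0 subr0.
by rewrite coefCM coefXM; case: q.
Qed.

Lemma coef_monomialXY a b p q :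
  ((varx R ^+ a * vary R ^+ b)`_p)`_q = ((p == a) && (q == b))%:R.
Proof.
rewrite /varx /vary -rmorphXn mulrC coefCM coefXn.
by case: (p == a); rewrite ?mulr1 ?mulr0 ?coef0 //= coefXn.
Qed.

Lemma sum_natr_bool (T : finType) (P Q : pred T) :
  \sum_(F | P F) (Q F)%:R = #|[set F | P F && Q F]|%:R :> R.
Proof.
rewrite -sum1_card natr_sum (eq_bigl (fun F => P F && Q F)) => [|F]; last first.
  by rewrite inE.
by rewrite big_mkcondr; apply: eq_bigr => F _; case: (Q F).
Qed.

(* The exponents of x and y attached to a spanning subgraph F of a connected
   graph, with f = #|F| and k = kappa F. *)
Lemma whitney_exponentsE (f k p q n : nat) :
  (0 < k <= n)%N -> (n <= f + k)%N -> (p < n)%N ->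
  ((p == n - 1 - (n - k)) && (q == f + k - n))%N =
  ((f == q + n - p.+1) && (k == p.+1))%N.
Proof.
move=> /andP [k_gt0 k_le] fk p_lt.
by apply/idP/idP => /andP [/eqP e1 /eqP e2]; apply/andP; split; apply/eqP; lia.
Qed.

Lemma coef_whitney n m (E : edgeset n) p q : Cnm m E ->
  ((whitney R E)`_p)`_q = if (p < n)%N then (Nik_exact E (q + n - p.+1) p.+1)%:R
                          else 0.
Proof.
case/and3P => sE _ /eqP kE.
have n_gt0 : (0 < n)%N by rewrite -kE (leq_trans _ (kappa_le E)).
rewrite /whitney !coef_sum; under eq_bigr do rewrite coef_monomialXY.
rewrite sum_natr_bool; case: ifP => p_lt.
- congr _%:R; apply: eq_card => F; rewrite !inE; case sub: (F \subset E) => //=.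
  rewrite /rk /crk kE whitney_exponentsE ?kappa_gt0 ?kappa_le //.
  exact: leq_card_kappa (simple_graphS sE sub).
- rewrite -[0 : R]/(0%N%:R); congr _%:R; apply/eqP; rewrite cards_eq0; apply/eqP/setP => F.
  rewrite !inE; apply/negbTE/negP => /andP [_ /andP [/eqP e _]].
  have := kappa_le F; have := kappa_gt0 F n_gt0; move: e p_lt; rewrite /rk kE; lia.
Qed.

Definition whitney_quotient n m (E : edgeset n) : {poly {poly R}} :=
  \poly_(p < n) \poly_(q < m.+1) (Nik E (q + n - p.+1) p.+1)%:R.

Lemma coef_whitney_quotient n m (E : edgeset n) p q : Cnm m E ->
  ((whitney_quotient m E)`_p)`_q =
  if (p < n)%N then (Nik E (q + n - p.+1) p.+1)%:R else 0.
Proof.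
case/and3P => _ /eqP mE _; rewrite coef_poly; case: ifP => p_lt; last first.
  by rewrite coef0.
rewrite coef_poly; case: ifP => // /negbT; rewrite -leqNgt => q_ge.
by rewrite Nik_gt_card // mE; lia.
Qed.

(* The defect is -x^n y (1 + y)^m, independent of the graph. *)
Lemma coef_whitney_defect n m (E : edgeset n) p q : Cnm m E ->
  (((1 - varx R * vary R) * whitney_quotient m E - whitney R E)`_p)`_q =
  if (p == n)%N then (if q is q'.+1 then - 'C(m, q')%:R else 0) else 0.
Proof.
move=> cE; have [sE /eqP mE /eqP kE] := and3P cE.
have n_gt0 : (0 < n)%N by rewrite -kE (leq_trans _ (kappa_le E)).
rewrite coefB coefB coef_1subXY !coef_whitney_quotient // (coef_whitney _ _ cE).
case: (ltngtP p n) => p_n.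
- case: p p_n => [|p] p_n /=.
    by rewrite subr0 NikS natrD Nik0 // add0r subrr.
  case: q => [|q] /=.
    by rewrite subr0 NikS natrD (@Nik_small n E) ?add0r ?subrr //; lia.
  rewrite coef_whitney_quotient // ifT; last by lia.
  have -> : (q + n - p.+1 = q.+1 + n - p.+2)%N by lia.
  by rewrite NikS natrD; ring.
- case: p p_n => [|p] p_n //=; case: q => [|q]; rewrite ?subr0 //.
  by rewrite coef_whitney_quotient // ifF ?subr0 //; lia.
- subst p; case: n n_gt0 E mE cE {sE kE} => // n _ E mE cE /=.
  case: q => [|q]; first by rewrite !subr0.
  by rewrite coef_whitney_quotient // ltnSn addnK Nik_n mE sub0r subr0.
Qed.

Lemma whitney_sub_quotient n m (G H : edgeset n) : Cnm m G -> Cnm m H ->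
  whitney R G - whitney R H =
  (1 - varx R * vary R) * (whitney_quotient m G - whitney_quotient m H).
Proof.
move=> cG cH; set u := 1 - varx R * vary R.
have defect_eq : u * whitney_quotient m G - whitney R G =
                 u * whitney_quotient m H - whitney R H.
  apply/polyP => p; apply/polyP => q.
  by rewrite coef_whitney_defect // coef_whitney_defect.
apply/eqP; rewrite -subr_eq0; apply/eqP.
transitivity ((u * whitney_quotient m H - whitney R H) -
              (u * whitney_quotient m G - whitney R G)); first by ring.
by rewrite defect_eq subrr.
Qed.

End WhitneyCoefficients.

Lemma one_subXY_neq0 (R : comNzRingType) : 1 - varx R * vary R != 0.
Proof.
apply/eqP => /(congr1 (fun P : {poly {poly R}} => (P`_0)`_0)).
rewrite -[1 - _]mulr1 coef_1subXY /= !coef0 coef1 /= coef1 subr0 /=.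
by move/eqP; rewrite oner_eq0.
Qed.

Lemma whitney_sub_quotientP (R : idomainType) n m (G H : edgeset n)
    (Q : {poly {poly R}}) : Cnm m G -> Cnm m H ->
  whitney R G - whitney R H = (1 - varx R * vary R) * Q <->
  Q = whitney_quotient R m G - whitney_quotient R m H.
Proof.
move=> cG cH; rewrite (whitney_sub_quotient R cG cH); split=> [|->] //.
by move/(mulfI (one_subXY_neq0 R)) ->.
Qed.

(* Outside the index range the counts of H vanish: Nik H i k = 0 when
   i + k < n, and a coefficient with i > m is zero on both sides. *)
Lemma nonneg_whitney_quotient_subP (R : realFieldType) n m (G H : edgeset n) :
  Cnm m G -> Cnm m H ->
  nonneg_poly2 (whitney_quotient R m G - whitney_quotient R m H) <->
  (forall i k, (i <= m)%N -> (1 <= k <= n)%N -> (Nik H i k <= Nik G i k)%N).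
Proof.
move=> cG cH; have [sH /eqP mH _] := and3P cH.
split=> [Q_ge0 i k i_le /andP [k_ge1 k_le] | N_le p q].
- have [lt|ge] := ltnP (i + k) n; first by rewrite Nik_small.
  have := Q_ge0 k.-1 (i + k - n)%N.
  rewrite coefB coefB !coef_whitney_quotient // prednK // k_le.
  have -> : (i + k - n + n - k = i)%N by lia.
  by rewrite subr_ge0 ler_nat.
- rewrite coefB coefB !coef_whitney_quotient //; case: ifP => p_lt.
    rewrite subr_ge0 ler_nat.
    have [gt|le] := ltnP m (q + n - p.+1)%N; first by rewrite Nik_gt_card ?mH.
    by apply: N_le => //; lia.
  by rewrite subr0.
Qed.

Theorem mainTheorem5 (R : realFieldType) (n m : nat) (G : edgeset n) :
  Cnm m G -> (whitney_maximum R m G <-> strong m G).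
Proof.
move=> cG; split=> [[_ W_sub] | [_ N_le]]; split=> // H cH.
- have [Q [Q_ge0 /(whitney_sub_quotientP _ cG cH) defQ]] := W_sub H cH.
  by apply/(nonneg_whitney_quotient_subP R cG cH); rewrite -defQ.
- exists (whitney_quotient R m G - whitney_quotient R m H); split.
    exact/(nonneg_whitney_quotient_subP R cG cH)/N_le.
  exact: whitney_sub_quotient.
Qed.
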